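(* Assume $X\in\mathbb R^{n\times p}$ ($p>n$) has rank $n$, let $X=UDV^\top$ be its SVD, and define $\tilde{\mathbf y}=D^\dagger U^\top\mathbf y$, $\tilde w=V^\top w$. Then the solution $\hat\theta$ of $\min_\theta\|\theta\|^{3/2}-w^\top\theta$ subject to $\mathbf y=X\theta$ satisfies $$\hat\theta=\hat\theta_{\mathsf{OLS}}+\alpha^\star\,(I-X^\top(XX^\top)^{-1}X)\,w,\qquad \hat\theta_{\mathsf{OLS}}=X^\top(XX^\top)^{-1}\mathbf y,$$ where $$\alpha^\star=\sqrt{\frac{8\|\tilde w_{n+1:p}\|^2+\sqrt{64\|\tilde w_{n+1:p}\|^4+1296\|\tilde{\mathbf y}\|^2}}{81}}.$$
   Context: $w\in\mathbb R^p$ is any fixed vector (in the paper $w=\theta(0)/\sqrt{\|\theta(0)\|}$), $\mathbf y\in\mathbb R^n$. $X=UDV^\top$ with $U\in\mathbb R^{n\times n}$, $V\in\mathbb R^{p\times p}$ orthogonal and $D\in\mathbb R^{n\times p}$ rectangular diagonal with singular values in descending order; $D^\dagger\in\mathbb R^{p\times n}$ its pseudo-inverse. For $v\in\mathbb R^p$, $v_{n+1:p}$ denotes $v$ with its first $n$ coordinates set to zero. *)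

From HB Require Import structures.
From mathcomp Require Import all_boot all_order all_algebra.
From mathcomp Require Import reals exp.
Set Implicit Arguments. Unset Strict Implicit. Unset Printing Implicit Defensive.
Import Order.TTheory GRing.Theory Num.Theory.
Local Open Scope ring_scope.

Definition vnorm (R : realType) (m : nat) (v : 'cV[R]_m) : R :=
  Num.sqrt (\sum_(i < m) v i 0 ^+ 2).

(* v_{n+1:p}: v with its first n coordinates set to zero. *)
Definition tail_from (R : realType) (p : nat) (n : nat) (v : 'cV[R]_p) : 'cV[R]_p :=
  \col_(i < p) (if (n <= i)%N then v i 0 else 0).

(* Moore-Penrose pseudo-inverse of a rectangular diagonal matrix D (n x p):
   the p x n matrix with 1/d_i on the diagonal where d_i <> 0, 0 elsewhere
   (in MathComp 0^-1 = 0). *)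
Definition pinv_rdiag (R : realType) (n p : nat) (D : 'M[R]_(n, p)) : 'M[R]_(p, n) :=
  \matrix_(i < p, j < n) (if (i == j :> nat) then (D j i)^-1 else 0).

Definition is_svd (R : realType) (n p : nat) (X : 'M[R]_(n, p))
    (U : 'M[R]_n) (D : 'M[R]_(n, p)) (V : 'M[R]_p) : Prop :=
  U^T *m U = 1%:M /\ U *m U^T = 1%:M /\ V^T *m V = 1%:M /\ V *m V^T = 1%:M /\
      (forall (i : 'I_n) (j : 'I_p), (i : nat) <> j -> D i j = 0) /\
      (forall (i : 'I_n) (j : 'I_p), (i : nat) = j -> 0 <= D i j) /\
      (forall (i1 i2 : 'I_n) (j1 j2 : 'I_p), (i1 : nat) = j1 -> (i2 : nat) = j2 ->
          (i1 <= i2)%N -> D i2 j2 <= D i1 j1) /\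
    X = U *m D *m V^T.

Definition objective (R : realType) (p : nat) (w theta : 'cV[R]_p) : R :=
  powR (vnorm theta) (3 / 2) - (w^T *m theta) 0 0.

Definition is_solution (R : realType) (n p : nat) (X : 'M[R]_(n, p))
    (y : 'cV[R]_n) (w theta : 'cV[R]_p) : Prop :=
  y = X *m theta /\
  forall theta' : 'cV[R]_p, y = X *m theta' -> objective w theta <= objective w theta'.

From HB Require Import structures.
From mathcomp Require Import all_boot all_order all_algebra.
From mathcomp Require Import reals exp.
From mathcomp Require Import ring lra.
Import Order.TTheory GRing.Theory Num.Theory.
Local Open Scope ring_scope.

(* Write M := V D^+ U^T.  Since X has full row rank, the singular values are
   nonzero, so X M = 1 and M X = V diag(1_n, 0) V^T is a symmetric projection;
   consequently X^T (X X^T)^{-1} = M, theta_OLS = M y, and 1 - M X is the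
   orthogonal projection onto ker X.  The feasible set is M y + ker X, with
   M y orthogonal to ker X, and on ker X the linear term w^T d equals u^T d
   for u := (1 - M X) w.  The norms are invariant under V, so |u| = a and
   |M y| = b.
   The candidate theta_star = M y + alpha u satisfies |theta_star| = (9/4) alpha^2
   exactly when (81/16) alpha^4 = a^2 alpha^2 + b^2, the quartic solved by the
   stated alpha.  For feasible theta put s^2 = |theta|, t^2 = |theta_star|; by
   Cauchy-Schwarz and the identity
     alpha (s^3 - t^3 - w^T (theta - theta_star))
       = (t/3) (s - t)^2 (2 s + t) + (s^2 t^2 - <theta_star, theta>)
   the objective gap is nonnegative, and it vanishes only if theta = theta_star. *)

Definition dot (R : realType) (p : nat) (x y : 'cV[R]_p) : R := (x^T *m y) 0 0.
Arguments dot {R p}.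

Section InnerProduct.
Context {R : realType} {p : nat}.
Implicit Types x y z : 'cV[R]_p.

Lemma dotC x y : dot x y = dot y x.
Proof. by rewrite /dot !mxE; apply: eq_bigr => i _; rewrite !mxE mulrC. Qed.

Lemma dotDr x y z : dot x (y + z) = dot x y + dot x z.
Proof. by rewrite /dot mulmxDr mxE. Qed.

Lemma dotZr a x y : dot x (a *: y) = a * dot x y.
Proof. by rewrite /dot -scalemxAr mxE. Qed.

Lemma dotBr x y z : dot x (y - z) = dot x y - dot x z.
Proof. by rewrite dotDr -scaleN1r dotZr mulN1r. Qed.

Lemma dotDl x y z : dot (x + y) z = dot x z + dot y z.
Proof. by rewrite dotC dotDr !(dotC z). Qed.

Lemma dotZl a x y : dot (a *: x) y = a * dot x y.
Proof. by rewrite dotC dotZr dotC. Qed.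

Lemma dotBl x y z : dot (x - y) z = dot x z - dot y z.
Proof. by rewrite dotC dotBr !(dotC z). Qed.

Lemma dot0r x : dot x 0 = 0.
Proof. by rewrite /dot mulmx0 mxE. Qed.

Lemma dot0l x : dot 0 x = 0.
Proof. by rewrite dotC dot0r. Qed.

Lemma dot_adjoint q (A : 'M[R]_(q, p)) x (y : 'cV[R]_q) :
  dot (A *m x) y = dot x (A^T *m y).
Proof. by rewrite /dot trmx_mul mulmxA. Qed.

Lemma dot_sum x : dot x x = \sum_(i < p) x i 0 ^+ 2.
Proof. by rewrite /dot mxE; apply: eq_bigr => i _; rewrite mxE expr2. Qed.

Lemma dot_ge0 x : 0 <= dot x x.
Proof. by rewrite dot_sum sumr_ge0 // => i _; rewrite sqr_ge0. Qed.

Lemma dot_eq0 x : dot x x = 0 -> x = 0.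
Proof.
rewrite dot_sum => /eqP; rewrite psumr_eq0 => [/allP x0|i _]; last exact: sqr_ge0.
apply/matrixP => i j; rewrite (ord1 j) mxE.
by have /(_ (mem_index_enum i)) := x0 i; rewrite implyTb sqrf_eq0 => /eqP.
Qed.

Lemma vnorm_ge0 x : 0 <= vnorm x.
Proof. exact: sqrtr_ge0. Qed.

Lemma vnorm_sqr x : vnorm x ^+ 2 = dot x x.
Proof. by rewrite /vnorm -dot_sum sqr_sqrtr // dot_ge0. Qed.

Lemma vnorm_eq0 x : vnorm x = 0 -> x = 0.
Proof. by move=> x0; apply: dot_eq0; rewrite -vnorm_sqr x0 expr0n. Qed.

Lemma vnorm_orth (V : 'M[R]_p) : V^T *m V = 1%:M -> forall x, vnorm (V *m x) = vnorm x.
Proof. by move=> VV x; rewrite /vnorm -!dot_sum dot_adjoint mulmxA VV mul1mx. Qed.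

(* Cauchy-Schwarz, from the nonnegativity of |y|^2 |vnorm y x - vnorm x y|^2. *)
Lemma cauchy_schwarz x y : dot x y <= vnorm x * vnorm y.
Proof.
have [/vnorm_eq0 ->|xn0] := eqVneq (vnorm x) 0.
  by rewrite dot0l mulr_ge0 ?vnorm_ge0.
have [/vnorm_eq0 ->|yn0] := eqVneq (vnorm y) 0.
  by rewrite dot0r mulr_ge0 ?vnorm_ge0.
have xp : 0 < vnorm x by rewrite lt0r xn0 vnorm_ge0.
have yp : 0 < vnorm y by rewrite lt0r yn0 vnorm_ge0.
have := dot_ge0 (vnorm y *: x - vnorm x *: y).
rewrite dotBl !dotBr !dotZl !dotZr (dotC y x) -!vnorm_sqr.
have := mulr_gt0 xp yp.
move: (dot x y) (vnorm x) (vnorm y) => c a b; nra.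
Qed.

End InnerProduct.

Lemma powR32 (R : realType) (x : R) : 0 <= x -> powR x (3 / 2) = Num.sqrt x ^+ 3.
Proof.
move=> x0; rewrite (_ : (3 / 2 : R) = 2^-1 * 3%:R); last by rewrite mulrC.
by rewrite powRrM powR12_sqrt // powR_mulrn // sqrtr_ge0.
Qed.

(* Read s^2 = |theta|, t^2 = |theta_star|,
   lam = w^T (theta - theta_star) and q = <theta_star, theta>: the objective
   gap s^3 - t^3 - lam is nonnegative, and it vanishes only if s = t and
   equality holds in Cauchy-Schwarz. *)
Lemma objective_gap_scalar {R : realFieldType} {s t al lam q : R} :
  0 <= s -> 0 <= al -> t = 3 / 2 * al -> al * lam = q - t ^+ 4 ->
  q <= s ^+ 2 * t ^+ 2 -> (al = 0 -> lam = 0) ->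
  t ^+ 3 + lam <= s ^+ 3 /\ (s ^+ 3 <= t ^+ 3 + lam -> s = t /\ q = t ^+ 4).
Proof.
move=> s0 al0 ht hlam hq hlam0.
have [al_eq0|al_neq0] := eqVneq al 0.
  have t0 : t = 0 by rewrite ht al_eq0 mulr0.
  have q0 : q = 0 by move: hlam; rewrite al_eq0 t0 mul0r expr0n subr0.
  rewrite hlam0 // t0 q0 !expr0n /= addr0; split=> [|s3_le0]; first exact: exprn_ge0.
  have s3_eq0 : s ^+ 3 = 0 by apply/eqP; rewrite eq_le s3_le0 exprn_ge0.
  by move/eqP: s3_eq0; rewrite expf_eq0 /= => /eqP ->.
have alp : 0 < al by rewrite lt0r al_neq0.
have tp : 0 < t by rewrite ht; lra.
(* al * (gap) = (t/3) (s - t)^2 (2s + t) + (s^2 t^2 - q), a sum of two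
   nonnegative terms *)
have gapE : al * (s ^+ 3 - (t ^+ 3 + lam)) =
    t / 3 * ((s - t) ^+ 2 * (2 * s + t)) + (s ^+ 2 * t ^+ 2 - q).
  by rewrite mulrBr mulrDr hlam ht; field.
have tangent_ge0 : 0 <= t / 3 * ((s - t) ^+ 2 * (2 * s + t)).
  by apply: mulr_ge0; [lra | apply: mulr_ge0; [exact: sqr_ge0 | lra]].
have gap_ge0 : 0 <= al * (s ^+ 3 - (t ^+ 3 + lam)) by rewrite gapE; lra.
split=> [|gap_le0]; first by rewrite -subr_ge0 -(pmulr_rge0 _ alp).
have : al * (s ^+ 3 - (t ^+ 3 + lam)) <= 0 by rewrite pmulr_rle0 // subr_le0.
rewrite gapE => sum_le0.
have tangent0 : t / 3 * ((s - t) ^+ 2 * (2 * s + t)) = 0 by lra.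
have st : s = t.
  move/eqP: tangent0; rewrite !mulf_eq0 (gt_eqF tp) invr_eq0 pnatr_eq0 orbb /=.
  by rewrite subr_eq0 => /orP[/eqP //|/eqP h]; lra.
split=> //; have -> : q = s ^+ 2 * t ^+ 2 by lra.
by rewrite st -exprD.
Qed.

Lemma quartic_root {R : rcfType} (a b : R) :
  let al := Num.sqrt ((8 * a ^+ 2 + Num.sqrt (64 * a ^+ 4 + 1296 * b ^+ 2)) / 81) in
  [/\ 0 <= al, 81 / 16 * al ^+ 4 = a ^+ 2 * al ^+ 2 + b ^+ 2 & (al = 0 -> a = 0)].
Proof.
move=> al; pose S := Num.sqrt (64 * a ^+ 4 + 1296 * b ^+ 2).
have S0 : 0 <= S := sqrtr_ge0 _.
have S2 : S ^+ 2 = 64 * a ^+ 4 + 1296 * b ^+ 2.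
  by rewrite sqr_sqrtr // addr_ge0 // mulr_ge0 // ?exprn_even_ge0.
have al2 : al ^+ 2 = (8 * a ^+ 2 + S) / 81.
  by rewrite /al -/S sqr_sqrtr // divr_ge0 // addr_ge0 // mulr_ge0 // sqr_ge0.
split; first exact: sqrtr_ge0.
- rewrite (_ : al ^+ 4 = (al ^+ 2) ^+ 2); last by rewrite -exprM.
  rewrite al2.
  apply/eqP; rewrite -subr_eq0.
  have -> : 81 / 16 * ((8 * a ^+ 2 + S) / 81) ^+ 2 -
      (a ^+ 2 * ((8 * a ^+ 2 + S) / 81) + b ^+ 2) =
      (S ^+ 2 - (64 * a ^+ 4 + 1296 * b ^+ 2)) / 1296 by field.
  by rewrite S2 subrr mul0r.
- move=> al0; have : 8 * a ^+ 2 + S = 0.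
    by move: al2; rewrite al0 expr0n /= => h; lra.
  by move=> h; apply/eqP; rewrite -sqrf_eq0 eq_le sqr_ge0 andbT; nra.
Qed.

Definition lead_diag (R : realType) (n p : nat) : 'M[R]_p :=
  \matrix_(i, j) ((i == j) && (i < n)%N)%:R.

Lemma lead_diag_tr (R : realType) (n p : nat) : (lead_diag R n p)^T = lead_diag R n p.
Proof. by apply/matrixP => i j; rewrite !mxE eq_sym; case: eqVneq => // ->. Qed.

Lemma tail_fromE (R : realType) (n p : nat) (v : 'cV[R]_p) :
  (1%:M - lead_diag R n p) *m v = tail_from n v.
Proof.
apply/matrixP => i k; rewrite (ord1 k) !mxE (bigD1 i) //= big1 => [|j ji].
  by rewrite addr0 !mxE eqxx /=; case: leqP => _; rewrite ?subr0 ?subrr ?mul1r ?mul0r.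
by rewrite !mxE eq_sym (negbTE ji) subrr mul0r.
Qed.

Section RectangularDiagonal.
Context {R : realType} {n p : nat} {D : 'M[R]_(n, p)}.
Hypothesis np : (n <= p)%N.
Hypothesis D_offdiag : forall (i : 'I_n) (j : 'I_p), (i : nat) <> j -> D i j = 0.
Hypothesis D_diag : forall (i : 'I_n) (j : 'I_p), (i : nat) = j -> D i j != 0.

Lemma pinv_rdiag_mulr : D *m pinv_rdiag D = 1%:M.
Proof.
apply/matrixP=> i j; rewrite !mxE (bigD1 (widen_ord np i)) //= big1 => [|k ki].
  rewrite addr0 mxE /=; have [<-|ij] := eqVneq i j.
    by rewrite eqxx mulfV //; exact: D_diag.
  by rewrite val_eqE (negbTE ij) mulr0.
rewrite D_offdiag ?mul0r // => ik; move/eqP: ki; apply; exact: val_inj.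
Qed.

Lemma pinv_rdiag_mull : pinv_rdiag D *m D = lead_diag R n p.
Proof.
apply/matrixP=> i j; rewrite !mxE; case: (ltnP i n) => [lt_in|le_ni]; last first.
  rewrite andbF big1 // => k _; rewrite mxE.
  by case: eqP => [ik|_]; [move: le_ni; rewrite ik leqNgt ltn_ord | rewrite mul0r].
rewrite andbT (bigD1 (Ordinal lt_in)) //= big1 => [|k ki].
  rewrite addr0 mxE /= eqxx; have [<-|ij] := eqVneq i j.
    by rewrite mulVf //; exact: D_diag.
  by rewrite [D _ j]D_offdiag ?mulr0 //= => /val_inj; apply/eqP.
rewrite mxE; case: eqP => [ik|_]; last exact: mul0r.
by move: ki; rewrite -val_eqE /= -ik eqxx.
Qed.

End RectangularDiagonal.

Definition svd_rinv (R : realType) (n p : nat) (U : 'M[R]_n) (D : 'M[R]_(n, p))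
    (V : 'M[R]_p) : 'M[R]_(p, n) :=
  V *m pinv_rdiag D *m U^T.
Arguments svd_rinv {R n p}.

Section SVDRightInverse.
Context {R : realType} {n p : nat} {X : 'M[R]_(n, p)}.
Context {U : 'M[R]_n} {D : 'M[R]_(n, p)} {V : 'M[R]_p}.
Hypothesis np : (n <= p)%N.
Hypothesis rkX : \rank X = n.
Hypothesis svdX : is_svd X U D V.

Let M := svd_rinv U D V.

(* Full row rank forces the singular values to be nonzero: a vanishing
   diagonal entry D i i would make row i of U^T X = D V^T zero. *)
Lemma svd_diag_neq0 (i : 'I_n) (j : 'I_p) : (i : nat) = j -> D i j != 0.
Proof.
have [UU [_ [_ [_ [D_offdiag [_ [_ XE]]]]]]] := svdX.
move=> ij; apply/negP => /eqP Dij.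
have rowD0 : delta_mx 0 i *m D = 0 :> 'rV_p.
  apply/matrixP => k l; rewrite -rowE !mxE.
  have [il|il] := eqVneq (i : nat) l; last by apply: D_offdiag; apply/eqP.
  by rewrite (_ : l = j) //; apply: val_inj; rewrite /= -il ij.
have rowUX0 : delta_mx 0 i *m U^T *m X = (0 : 'rV[R]_n) *m X.
  by rewrite XE !mulmxA -(mulmxA _ U^T U) UU mulmx1 rowD0 !mul0mx.
have Xfree : row_free X by rewrite /row_free rkX.
have rowU0 : delta_mx 0 i *m U^T = 0 := row_free_inj Xfree rowUX0.
have : delta_mx 0 i = 0 :> 'rV[R]_n by rewrite -[delta_mx 0 i]mulmx1 -UU mulmxA rowU0 mul0mx.
by move/matrixP/(_ 0 i); rewrite !mxE !eqxx /= => /eqP; rewrite oner_eq0.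
Qed.

Lemma svd_rinvP : X *m M = 1%:M.
Proof.
have [_ [UU' [VV [_ [D_offdiag [_ [_ XE]]]]]]] := svdX.
rewrite XE /M /svd_rinv !mulmxA -(mulmxA _ V^T V) VV mulmx1.
by rewrite -(mulmxA U D) (pinv_rdiag_mulr np D_offdiag svd_diag_neq0) mulmx1.
Qed.

Lemma svd_rinv_proj : M *m X = V *m lead_diag R n p *m V^T.
Proof.
have [UU [_ [_ [_ [D_offdiag [_ [_ XE]]]]]]] := svdX.
rewrite XE /M /svd_rinv !mulmxA -(mulmxA _ U^T U) UU mulmx1.
by rewrite -(mulmxA V) (pinv_rdiag_mull D_offdiag svd_diag_neq0).
Qed.

Lemma svd_rinv_sym : (M *m X)^T = M *m X.
Proof. by rewrite svd_rinv_proj !trmx_mul trmxK lead_diag_tr mulmxA. Qed.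

Lemma svd_vnorm_ytil (y : 'cV[R]_n) :
  vnorm (pinv_rdiag D *m U^T *m y) = vnorm (M *m y).
Proof.
have [_ [_ [VV _]]] := svdX.
by rewrite /M /svd_rinv -!mulmxA (vnorm_orth _ VV).
Qed.

Lemma svd_vnorm_tail (w : 'cV[R]_p) :
  vnorm (tail_from n (V^T *m w)) = vnorm ((1%:M - M *m X) *m w).
Proof.
have [_ [_ [VV [VV' _]]]] := svdX.
rewrite svd_rinv_proj -tail_fromE -[1%:M in RHS]VV' -(vnorm_orth _ VV).
by rewrite !mulmxA mulmxBr mulmx1 mulmxBl.
Qed.

End SVDRightInverse.

Section ConstrainedMinimizer.
Context {R : realType} {n p : nat} {X : 'M[R]_(n, p)} {M : 'M[R]_(p, n)}.
Hypothesis XM : X *m M = 1%:M.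
Hypothesis MX_sym : (M *m X)^T = M *m X.

Lemma rinv_factor : M = X^T *m (M^T *m M).
Proof. by rewrite mulmxA -trmx_mul MX_sym -mulmxA XM mulmx1. Qed.

Lemma ols_rinv : X^T *m invmx (X *m X^T) = M.
Proof.
have XXM : X *m X^T *m (M^T *m M) = 1%:M by rewrite -mulmxA -rinv_factor XM.
have [XX_unit _] := mulmx1_unit XXM.
by rewrite -[invmx _]mulmx1 -XXM (mulmxA (invmx _)) mulVmx // mul1mx -rinv_factor.
Qed.

Lemma rinv_ker_orth (y : 'cV[R]_n) (d : 'cV[R]_p) : X *m d = 0 -> dot (M *m y) d = 0.
Proof.
move=> Xd; rewrite dot_adjoint rinv_factor trmx_mul trmxK -mulmxA Xd.
by rewrite mulmx0 dot0r.
Qed.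

Lemma proj_ker (w : 'cV[R]_p) : X *m ((1%:M - M *m X) *m w) = 0.
Proof. by rewrite mulmxA mulmxBr mulmx1 mulmxA XM mul1mx subrr mul0mx. Qed.

Lemma proj_ker_dot (w d : 'cV[R]_p) :
  X *m d = 0 -> dot w d = dot ((1%:M - M *m X) *m w) d.
Proof.
move=> Xd; rewrite dot_adjoint linearB /= trmx1 MX_sym mulmxBl mul1mx.
by rewrite -mulmxA Xd mulmx0 subr0.
Qed.

Context {y : 'cV[R]_n} {w : 'cV[R]_p} {alpha : R}.
Let t0 := M *m y.
Let u := (1%:M - M *m X) *m w.
Hypothesis alpha_ge0 : 0 <= alpha.
Hypothesis alpha_root : 81 / 16 * alpha ^+ 4 = vnorm u ^+ 2 * alpha ^+ 2 + vnorm t0 ^+ 2.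
Hypothesis alpha_eq0 : alpha = 0 -> u = 0.

Let theta_star := t0 + alpha *: u.

Lemma theta_star_feasible : X *m theta_star = y.
Proof. by rewrite mulmxDr -scalemxAr proj_ker scaler0 addr0 mulmxA XM mul1mx. Qed.

(* By Pythagoras and the choice of alpha, |theta_star| = (9/4) alpha^2. *)
Lemma dot_theta_star : dot theta_star theta_star = (3 / 2 * alpha) ^+ 4.
Proof.
rewrite !dotDl !dotDr !dotZl !dotZr (dotC u t0) (rinv_ker_orth y _ (proj_ker w)).
rewrite -!vnorm_sqr !mulr0 addr0 add0r mulrA -expr2.
have -> : (3 / 2 * alpha) ^+ 4 = 81 / 16 * alpha ^+ 4 by field.
by rewrite alpha_root addrC mulrC.
Qed.

Lemma vnorm_theta_star : vnorm theta_star = (3 / 2 * alpha) ^+ 2.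
Proof.
rewrite /vnorm -dot_sum dot_theta_star (_ : 4 = 2 * 2)%N // exprM sqrtr_sqr.
by rewrite ger0_norm // sqr_ge0.
Qed.

Lemma objective_compare (theta : 'cV[R]_p) : X *m theta = y ->
  objective w theta_star <= objective w theta /\
  (objective w theta <= objective w theta_star -> theta = theta_star).
Proof.
move=> Xtheta; pose d := theta - theta_star; pose t := 3 / 2 * alpha.
have Xd : X *m d = 0 by rewrite mulmxBr Xtheta theta_star_feasible subrr.
pose s := Num.sqrt (vnorm theta).
have s_ge0 : 0 <= s := sqrtr_ge0 _.
have norm_theta : vnorm theta = s ^+ 2 by rewrite sqr_sqrtr // vnorm_ge0.
have norm_star : vnorm theta_star = t ^+ 2 := vnorm_theta_star.
pose q := dot theta_star theta; pose lam := dot u d.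
(* alpha u = theta_star - M y and M y is orthogonal to d. *)
have lamE : alpha * lam = q - t ^+ 4.
  rewrite -dotZl (_ : alpha *: u = theta_star - t0) ?dotBl; last by rewrite addrC addKr.
  by rewrite (rinv_ker_orth y _ Xd) subr0 dotBr dot_theta_star.
have q_le : q <= s ^+ 2 * t ^+ 2 by rewrite -norm_theta -norm_star mulrC cauchy_schwarz.
have lam0 : alpha = 0 -> lam = 0 by move/alpha_eq0; rewrite /lam => ->; exact: dot0l.
have linear_gap : (w^T *m theta) 0 0 - (w^T *m theta_star) 0 0 = lam.
  by rewrite -[LHS]/(dot w theta - dot w theta_star) -dotBr (proj_ker_dot w _ Xd).
rewrite /objective !powR32 ?vnorm_ge0 // norm_star sqrtr_sqr ger0_norm -/s; last first.
  by apply: mulr_ge0; rewrite // divr_ge0.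
have [gap_ge0 gap_eq0] := objective_gap_scalar (t := t) s_ge0 alpha_ge0 erefl lamE q_le lam0.
split=> [|obj_le]; first lra.
have [st qE] : s = t /\ q = t ^+ 4 by apply: gap_eq0; lra.
apply/subr0_eq/dot_eq0; rewrite -/d dotBl !dotBr (dotC theta) -/q qE dot_theta_star.
by rewrite -vnorm_sqr norm_theta st -exprM -/t; ring.
Qed.

Theorem constrained_minimizer (theta : 'cV[R]_p) :
  is_solution X y w theta <-> theta = theta_star.
Proof.
split=> [[yE opt]|->].
  by apply: (objective_compare _ (esym yE)).2; apply: opt; rewrite theta_star_feasible.
split=> [|theta' yE]; first by rewrite theta_star_feasible.
exact: (objective_compare _ (esym yE)).1.
Qed.
End ConstrainedMinimizer.

Theorem mainTheorem4 (R : realType) (n p : nat) (X : 'M[R]_(n, p))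
    (y : 'cV[R]_n) (w : 'cV[R]_p)
    (U : 'M[R]_n) (D : 'M[R]_(n, p)) (V : 'M[R]_p) :
  (n < p)%N ->
  \rank X = n ->
  is_svd X U D V ->
  let ytil := pinv_rdiag D *m U^T *m y in
  let wtil := V^T *m w in
  let a := vnorm (tail_from n wtil) in
  let b := vnorm ytil in
  let alpha := Num.sqrt ((8 * a ^+ 2 + Num.sqrt (64 * a ^+ 4 + 1296 * b ^+ 2)) / 81) in
  let theta_OLS := X^T *m invmx (X *m X^T) *m y in
  forall theta : 'cV[R]_p,
    is_solution X y w theta <->
    theta = theta_OLS + alpha *: ((1%:M - X^T *m invmx (X *m X^T) *m X) *m w).
Proof.
move=> lt_np rkX svdX ytil wtil a b alpha theta_OLS theta.
have np := ltnW lt_np.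
have XM := svd_rinvP np rkX svdX.
have MX_sym := svd_rinv_sym rkX svdX.
have [alpha_ge0 alpha_root alpha_eq0] := quartic_root a b.
rewrite /theta_OLS (ols_rinv XM MX_sym).
apply: constrained_minimizer => //.
- by rewrite -(svd_vnorm_tail rkX svdX) -(svd_vnorm_ytil svdX).
- by move/alpha_eq0; rewrite /a (svd_vnorm_tail rkX svdX); exact: vnorm_eq0.
Qed.
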